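(* Let $\mathcal L$ be a choice logic, $V\subseteq\mathcal U$ a finite set of propositional variables, and $s:\mathcal P(V)\to \mathrm{Obt}(\mathcal L)$ any function. Then there is an $\mathcal L$-formula $F$ such that $\deg_{\mathcal L}(\mathcal I,F)=s(\mathcal I)$ for every $\mathcal I\subseteq V$.
   Context: Fix a countably infinite set $\mathcal U$ of propositional variables. Let $\mathbb N=\{1,2,3,\dots\}$ and $\overline{\mathbb N}=\mathbb N\cup\{\infty\}$, with $n<\infty$ for all $n\in\mathbb N$. An interpretation is a set $\mathcal I\subseteq\mathcal U$ (the variables set to true). A choice logic $\mathcal L$ is specified by a finite set $C_{\mathcal L}$ of binary connective symbols disjoint from $\{\neg,\land,\lor\}$ and, for each $\circ\in C_{\mathcal L}$, a function $\mathrm{opt}_\circ:\mathbb N^2\to\mathbb N$ with $\mathrm{opt}_\circ(k,\ell)\le (k+1)(\ell+1)$ for all $k,\ell$, and a function $\deg_\circ:\mathbb N^2\times\overline{\mathbb N}^2\to\overline{\mathbb N}$ such that for all $k,\ell\in\mathbb N$, $m,n\in\overline{\mathbb N}$, either $\deg_\circ(k,\ell,m,n)\le \mathrm{opt}_\circ(k,\ell)$ or $\deg_\circ(k,\ell,m,n)=\infty$. The $\mathcal L$-formulas are built from variables in $\mathcal U$ using unary $\neg$ and binary $\land,\lor$ and the connectives in $C_{\mathcal L}$. The optionality $\mathrm{opt}_{\mathcal L}$ of formulas is defined by: $\mathrm{opt}_{\mathcal L}(a)=1$ for $a\in\mathcal U$; $\mathrm{opt}_{\mathcal L}(\neg F)=1$;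 $\mathrm{opt}_{\mathcal L}(F\land G)=\mathrm{opt}_{\mathcal L}(F\lor G)=\max(\mathrm{opt}_{\mathcal L}(F),\mathrm{opt}_{\mathcal L}(G))$; $\mathrm{opt}_{\mathcal L}(F\circ G)=\mathrm{opt}_\circ(\mathrm{opt}_{\mathcal L}(F),\mathrm{opt}_{\mathcal L}(G))$ for $\circ\in C_{\mathcal L}$. The satisfaction degree $\deg_{\mathcal L}(\mathcal I,F)\in\overline{\mathbb N}$ is defined by: $\deg_{\mathcal L}(\mathcal I,a)=1$ if $a\in\mathcal I$ and $\infty$ otherwise; $\deg_{\mathcal L}(\mathcal I,\neg F)=1$ if $\deg_{\mathcal L}(\mathcal I,F)=\infty$ and $\infty$ otherwise; $\deg_{\mathcal L}(\mathcal I,F\land G)=\max(\deg_{\mathcal L}(\mathcal I,F),\deg_{\mathcal L}(\mathcal I,G))$; $\deg_{\mathcal L}(\mathcal I,F\lor G)=\min(\deg_{\mathcal L}(\mathcal I,F),\deg_{\mathcal L}(\mathcal I,G))$; $\deg_{\mathcal L}(\mathcal I,F\circ G)=\deg_\circ(\mathrm{opt}_{\mathcal L}(F),\mathrm{opt}_{\mathcal L}(G),\deg_{\mathcal L}(\mathcal I,F),\deg_{\mathcal L}(\mathcal I,G))$ for $\circ\in C_{\mathcal L}$. A degree $m\in\overline{\mathbb N}$ is obtainable in $\mathcal L$ if there exist an interpretation $\mathcal I$ and an $\mathcal L$-formula $G$ with $\deg_{\mathcal L}(\mathcal I,G)=m$; $\mathrm{Obt}(\mathcal L)$ denotes the set of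 obtainable degrees. $\mathcal P(V)$ is the power set of $V$. *)

From mathcomp Require Import all_boot.
From mathcomp Require Import finmap.

Set Implicit Arguments.
Unset Strict Implicit.
Unset Printing Implicit Defensive.

(* Propositional variables U := nat (countably infinite).
   Degrees in N-bar = {1,2,...} U {oo} are encoded as [option nat]:
   [Some n] is the degree n (only n >= 1 ever arises), [None] is oo.
   Optionalities in N = {1,2,...} are encoded as [nat] (only values >= 1
   are ever used / constrained). *)

Definition deg_t := option nat.

Definition valid_deg (m : deg_t) : bool :=
  if m is Some k then 0 < k else true.

Definition dmax (m n : deg_t) : deg_t :=
  match m, n with
  | Some a, Some b => Some (maxn a b)
  | _, _ => None
  end.

Definition dmin (m n : deg_t) : deg_t :=
  match m, n with
  | Some a, Some b => Some (minn a b)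
  | Some a, None => Some a
  | None, Some b => Some b
  | None, None => None
  end.

(* A choice logic: a finite set of binary connective symbols (distinct from
   neg/and/or, which are separate constructors of [formula] below), with
   opt_c : N^2 -> N and deg_c : N^2 x Nbar^2 -> Nbar. *)
Record choice_logic := ChoiceLogic {
  conn : finType;
  opt_c : conn -> nat -> nat -> nat;
  deg_c : conn -> nat -> nat -> deg_t -> deg_t -> deg_t;
  opt_c_pos : forall c k l, 0 < k -> 0 < l -> 0 < opt_c c k l;
  opt_c_bound : forall c k l, 0 < k -> 0 < l ->
      opt_c c k l <= k.+1 * l.+1;
  deg_c_bound : forall c k l m n, 0 < k -> 0 < l ->
      valid_deg m -> valid_deg n ->
      (exists d, deg_c c k l m n = Some d /\ 0 < d /\ d <= opt_c c k l)
      \/ deg_c c k l m n = None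
}.

Inductive formula (C : Type) : Type :=
  | FVar of nat
  | FNeg of formula C
  | FAnd of formula C & formula C
  | FOr of formula C & formula C
  | FConn of C & formula C & formula C.

Arguments FVar {C}.

Section Semantics.
Variable L : choice_logic.

Fixpoint optL (F : formula (conn L)) : nat :=
  match F with
  | FVar _ => 1
  | FNeg _ => 1
  | FAnd F G => maxn (optL F) (optL G)
  | FOr F G => maxn (optL F) (optL G)
  | FConn c F G => opt_c c (optL F) (optL G)
  end.

(* An interpretation is a set of variables (those set to true),
   represented by its characteristic function. *)
Fixpoint degL (I : nat -> bool) (F : formula (conn L)) : deg_t :=
  match F with
  | FVar a => if I a then Some 1 else None
  | FNeg F => if degL I F is None then Some 1 else None
  | FAnd F G => dmax (degL I F) (degL I G)
  | FOr F G => dmin (degL I F) (degL I G)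
  | FConn c F G => deg_c c (optL F) (optL G) (degL I F) (degL I G)
  end.

Definition obtainable (m : deg_t) : Prop :=
  exists (I : nat -> bool) (G : formula (conn L)), degL I G = m.

End Semantics.

From mathcomp Require Import all_boot.
From mathcomp Require Import finmap.
Local Open Scope fset_scope.

(* The proof builds F as a disjunction, over
   all subsets I of V, of the "case formulas"  chi_I /\ G_I,  where
   - chi_I is the conjunction of literals describing I on V: it has degree 1
     on interpretations agreeing with I on V and degree oo elsewhere;
   - G_I is a formula with the constant degree s(I): starting from a witness
     (I0, G) of the obtainability of s(I), replace every variable of G by a
     tautology or a contradiction according to I0.
   Since degrees are always >= 1, the conjunction chi_I /\ G_I has degree s(I)
   on the interpretations matching I and oo elsewhere, and the disjunction
   (a min in N-bar) picks exactly the relevant case. *)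

Lemma dmax_1l (d : deg_t) : valid_deg d -> dmax (Some 1) d = d.
Proof. by case: d => [n|] //= n_gt0; rewrite (maxn_idPr n_gt0). Qed.

Lemma dmin_oor (d : deg_t) : dmin d None = d.
Proof. by case: d. Qed.

Lemma dmin_id (d : deg_t) : dmin d d = d.
Proof. by case: d => [n|] //=; rewrite minnn. Qed.

Section Formulas.
Variable L : choice_logic.
Notation form := (formula (conn L)).

Lemma optL_pos (F : form) : 0 < optL F.
Proof.
elim: F => [a|F _|F hF G _|F hF G _|c F hF G hG] //=; rewrite ?leq_max ?hF //.
exact: opt_c_pos.
Qed.

Lemma degL_valid (J : nat -> bool) (F : form) : valid_deg (degL J F).
Proof.
elim: F => [a|F _|F hF G hG|F hF G hG|c F hF G hG] /=.
- by case: (J a).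
- by case: (degL J F).
- by move: hF hG; case: (degL J F) => [m|]; case: (degL J G) => [n|] //= m0 n0;
    rewrite leq_max m0.
- by move: hF hG; case: (degL J F) => [m|]; case: (degL J G) => [n|] //= m0 n0;
    rewrite leq_min m0.
- by case: (deg_c_bound c (optL_pos F) (optL_pos G) hF hG) => [[d [-> [d0 _]]]|->].
Qed.

Definition ftop : form := FOr (FVar 0) (FNeg (FVar 0)).
Definition fbot : form := FAnd (FVar 0) (FNeg (FVar 0)).

Lemma degL_ftop (J : nat -> bool) : degL J ftop = Some 1.
Proof. by rewrite /=; case: (J 0). Qed.

Lemma degL_fbot (J : nat -> bool) : degL J fbot = None.
Proof. by rewrite /=; case: (J 0). Qed.

(* Freezing F at the interpretation I0: each variable is replaced by ftop or
   fbot according to I0.  Optionalities are unchanged, since variables,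
   ftop and fbot all have optionality 1. *)
Fixpoint freeze (I0 : nat -> bool) (F : form) : form :=
  match F with
  | FVar a => if I0 a then ftop else fbot
  | FNeg F => FNeg (freeze I0 F)
  | FAnd F G => FAnd (freeze I0 F) (freeze I0 G)
  | FOr F G => FOr (freeze I0 F) (freeze I0 G)
  | FConn c F G => FConn c (freeze I0 F) (freeze I0 G)
  end.

Lemma optL_freeze (I0 : nat -> bool) (F : form) : optL (freeze I0 F) = optL F.
Proof.
elim: F => [a|F hF|F hF G hG|F hF G hG|c F hF G hG] /=; rewrite ?hF ?hG //.
by case: (I0 a).
Qed.

(* The frozen formula has, under every interpretation, the degree that F has
   under I0; so every obtainable degree is the degree of a constant formula. *)
Lemma degL_freeze (I0 J : nat -> bool) (F : form) :
  degL J (freeze I0 F) = degL I0 F.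
Proof.
elim: F => [a|F hF|F hF G hG|F hF G hG|c F hF G hG] /=;
  rewrite ?hF ?hG ?optL_freeze //.
by case: (I0 a); rewrite ?degL_ftop ?degL_fbot.
Qed.

Fixpoint charf (p : nat -> bool) (l : seq nat) : form :=
  match l with
  | [::] => ftop
  | a :: l => FAnd (if p a then FVar a else FNeg (FVar a)) (charf p l)
  end.

Lemma degL_charf (p J : nat -> bool) (l : seq nat) :
  degL J (charf p l) = if all (fun a => p a == J a) l then Some 1 else None.
Proof.
elim: l => [|a l IH] /=; first exact: degL_ftop.
by rewrite IH; case: (p a) => /=; case: (J a) => /=; case: (all _ l).
Qed.

End Formulas.

Lemma agree_on_eq (V I J : {fset nat}) : I `<=` V -> J `<=` V ->
  all (fun a => (a \in I) == (a \in J)) V = (J == I).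
Proof.
move=> /fsubsetP IV /fsubsetP JV.
apply/allP/eqP => [agree|->]; last by move=> a _; rewrite eqxx.
apply/fsetP => x; apply/idP/idP => [xJ|xI].
- by move/eqP: (agree x (JV x xJ)) => ->.
- by move/eqP: (agree x (IV x xI)) => <-.
Qed.

Lemma piecewise_formula (L : choice_logic) (V : {fset nat})
    (s : {fset nat} -> deg_t)
    (hs : forall I : {fset nat}, I `<=` V -> obtainable L (s I))
    (l : seq {fset nat}) :
  (forall I, I \in l -> I `<=` V) ->
  exists F : formula (conn L), forall J, J `<=` V ->
    degL (fun x => x \in J) F = if J \in l then s J else None.
Proof.
elim: l => [|I l IH] lV.
  by exists (fbot L) => J _; rewrite degL_fbot.
have [F HF] := IH (fun I' I'l => lV I' (mem_behead (s:=I :: l) I'l)).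
have IV : I `<=` V by apply: lV; rewrite mem_head.
have [I0 [G HG]] := hs I IV.
have sI_valid : valid_deg (s I) by rewrite -HG degL_valid.
exists (FOr (FAnd (charf L (fun x => x \in I) V) (freeze L I0 G)) F) => J JV /=.
rewrite degL_charf degL_freeze HF // agree_on_eq // in_cons HG.
case: eqP => [->|_]; last by case: (s J); case: (J \in l).
by rewrite dmax_1l //; case: (I \in l); rewrite ?dmin_id ?dmin_oor.
Qed.

Theorem mainTheorem4 (L : choice_logic) (V : {fset nat})
    (s : {fset nat} -> deg_t)
    (hs : forall I : {fset nat}, I `<=` V -> @obtainable L (s I)) :
  exists F : formula (conn L),
    forall I : {fset nat}, I `<=` V -> @degL L (fun x => x \in I) F = s I.
Proof.
have powV : forall I, I \in enum_fset (fpowerset V) -> I `<=` V.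
  by move=> I; rewrite fpowersetE.
have [F HF] := @piecewise_formula L V s hs _ powV.
by exists F => J JV; rewrite HF // fpowersetE JV.
Qed.
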